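(* Let $N\ge2$. The elements $x_a^2x_b$, $x_ax_bx_a$ ($a,b\in\{1,\dots,N\}$, $a\ne b$) and $x_a^3$ ($a\in\{1,\dots,N\}$) of $C(S^{N-1,1}_{\mathbb R,*})$ are linearly independent.
   Context: $C(S^{N-1}_{\mathbb R,+})$ is the universal $C^*$-algebra generated by self-adjoint $x_1,\dots,x_N$ with $\sum x_i^2=1$; $C(S^{N-1,1}_{\mathbb R,*})$ is its quotient by the relations $x_ix_jx_k=0$ for $i,j,k$ pairwise distinct and $x_ix_jx_k=x_kx_jx_i$ otherwise; $x_i$ denote the images of the generators. *)

From Stdlib Require Import Reals.
Open Scope R_scope.

Record Cplx : Type := Cmk { Cre : R ; Cim : R }.
Definition C0 : Cplx := Cmk 0 0.
Definition C1 : Cplx := Cmk 1 0.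
Definition Cadd (a b : Cplx) : Cplx := Cmk (Cre a + Cre b) (Cim a + Cim b).
Definition Cmul (a b : Cplx) : Cplx :=
  Cmk (Cre a * Cre b - Cim a * Cim b) (Cre a * Cim b + Cim a * Cre b).
Definition Cconj (a : Cplx) : Cplx := Cmk (Cre a) (- Cim a).
Definition Cabs (a : Cplx) : R := sqrt (Cre a * Cre a + Cim a * Cim a).

Record CStarAlg : Type := {
  car :> Type;
  azero : car; aone : car;
  aadd : car -> car -> car; aopp : car -> car;
  amul : car -> car -> car; asmul : Cplx -> car -> car;
  astar : car -> car; anorm : car -> R;
  aadd_assoc : forall x y z, aadd x (aadd y z) = aadd (aadd x y) z;
  aadd_comm : forall x y, aadd x y = aadd y x;
  aadd_0 : forall x, aadd x azero = x;
  aadd_opp : forall x, aadd x (aopp x) = azero;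
  asmul_assoc : forall a b x, asmul a (asmul b x) = asmul (Cmul a b) x;
  asmul_1 : forall x, asmul C1 x = x;
  asmul_addl : forall a b x, asmul (Cadd a b) x = aadd (asmul a x) (asmul b x);
  asmul_addr : forall a x y, asmul a (aadd x y) = aadd (asmul a x) (asmul a y);
  amul_assoc : forall x y z, amul x (amul y z) = amul (amul x y) z;
  amul_1l : forall x, amul aone x = x;
  amul_1r : forall x, amul x aone = x;
  amul_addl : forall x y z, amul (aadd x y) z = aadd (amul x z) (amul y z);
  amul_addr : forall x y z, amul x (aadd y z) = aadd (amul x y) (amul x z);
  amul_smull : forall a x y, amul (asmul a x) y = asmul a (amul x y);
  amul_smulr : forall a x y, amul x (asmul a y) = asmul a (amul x y);
  astar_invol : forall x, astar (astar x) = x;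
  astar_add : forall x y, astar (aadd x y) = aadd (astar x) (astar y);
  astar_smul : forall a x, astar (asmul a x) = asmul (Cconj a) (astar x);
  astar_mul : forall x y, astar (amul x y) = amul (astar y) (astar x);
  anorm_eq0 : forall x, anorm x = 0 -> x = azero;
  anorm_tri : forall x y, anorm (aadd x y) <= anorm x + anorm y;
  anorm_smul : forall a x, anorm (asmul a x) = Cabs a * anorm x;
  anorm_mul : forall x y, anorm (amul x y) <= anorm x * anorm y;
  anorm_cstar : forall x, anorm (amul (astar x) x) = anorm x * anorm x;
  acomplete : forall u : nat -> car,
    (forall eps, 0 < eps -> exists M, forall m n, (M <= m)%nat -> (M <= n)%nat ->
        anorm (aadd (u m) (aopp (u n))) < eps) ->
    exists l, forall eps, 0 < eps -> exists M, forall n, (M <= n)%nat ->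
        anorm (aadd (u n) (aopp l)) < eps
}.

Arguments azero {c}. Arguments aone {c}. Arguments aadd {c}. Arguments aopp {c}.
Arguments amul {c}. Arguments asmul {c}. Arguments astar {c}. Arguments anorm {c}.

Fixpoint sumA {A : CStarAlg} (f : nat -> A) (n : nat) : A :=
  match n with O => azero | S k => aadd (sumA f k) (f k) end.

Definition is_star_hom (A B : CStarAlg) (phi : A -> B) : Prop :=
  (forall x y, phi (aadd x y) = aadd (phi x) (phi y)) /\
  (forall a x, phi (asmul a x) = asmul a (phi x)) /\
  (forall x y, phi (amul x y) = amul (phi x) (phi y)) /\
  (forall x, phi (astar x) = astar (phi x)) /\
  phi aone = aone.

(* Defining relations of C(S^{N-1,1}_{R,*}), generators indexed by 0..N-1 *)
Definition rel_S (N : nat) (A : CStarAlg) (x : nat -> A) : Prop :=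
  (forall i, (i < N)%nat -> astar (x i) = x i) /\
  sumA (fun i => amul (x i) (x i)) N = aone /\
  (forall i j k, (i < N)%nat -> (j < N)%nat -> (k < N)%nat ->
      i <> j -> j <> k -> i <> k -> amul (amul (x i) (x j)) (x k) = azero) /\
  (forall i j k, (i < N)%nat -> (j < N)%nat -> (k < N)%nat ->
      ~ (i <> j /\ j <> k /\ i <> k) ->
      amul (amul (x i) (x j)) (x k) = amul (amul (x k) (x j)) (x i)).

Definition is_universal_S (N : nat) (U : CStarAlg) (u : nat -> U) : Prop :=
  rel_S N U u /\
  forall (B : CStarAlg) (y : nat -> B), rel_S N B y ->
    exists! phi : U -> B, is_star_hom U B phi /\ (forall i, (i < N)%nat -> phi (u i) = y i).

Definition lincomb5p3 (N : nat) (A : CStarAlg) (x : nat -> A)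
    (alpha beta : nat -> nat -> Cplx) (gamma : nat -> Cplx) : A :=
  aadd
    (sumA (fun a => sumA (fun b =>
        if Nat.eq_dec a b then azero
        else aadd (asmul (alpha a b) (amul (amul (x a) (x a)) (x b)))
                  (asmul (beta a b) (amul (amul (x a) (x b)) (x a)))) N) N)
    (sumA (fun a => asmul (gamma a) (amul (amul (x a) (x a)) (x a))) N).

(** For distinct indices a, b and complex z, w with |z|^2 + |w|^2 = 1, the
    self-adjoint matrices X(z) = [[0, z], [z^*, 0]] and X(w), placed at a and b
    and 0 elsewhere, satisfy the defining relations in M_2(C): any triple
    product of pairwise distinct generators has a zero factor, and
    X(p) X(q) X(r) = X(p q^* r) is symmetric in p and r.  The universal
    property gives a *-homomorphism to M_2(C) (with the operator norm) under
    which the (1,2) entry of the linear combination becomes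
      alpha_ab |z|^2 w + beta_ab z^2 w^* + alpha_ba |w|^2 z + beta_ba w^2 z^*
      + gamma_a |z|^2 z + gamma_b |w|^2 w,
    so this polynomial vanishes on the unit sphere of C^2.  The points (1, 0)
    and (0, 1) kill gamma; then (3/5, ±4/5) and (3/5, ±4i/5) kill alpha and beta. *)

From Stdlib Require Import Reals Lra Lia Psatz.
Open Scope R_scope.

Lemma Cplx_ext (a b : Cplx) : Cre a = Cre b -> Cim a = Cim b -> a = b.
Proof. destruct a, b; simpl; intros -> ->; reflexivity. Qed.

Definition Copp (a : Cplx) : Cplx := Cmk (- Cre a) (- Cim a).

Definition Cnorm2 (z : Cplx) : R := Cre z * Cre z + Cim z * Cim z.

Lemma Cnorm2_ge0 z : 0 <= Cnorm2 z.
Proof. unfold Cnorm2; nra. Qed.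

Lemma Cnorm2_mul a b : Cnorm2 (Cmul a b) = Cnorm2 a * Cnorm2 b.
Proof. destruct a, b; unfold Cnorm2; simpl; ring. Qed.

Lemma Cnorm2_add_le a b : Cnorm2 (Cadd a b) <= 2 * Cnorm2 a + 2 * Cnorm2 b.
Proof.
  destruct a as [p q], b as [r s]; unfold Cnorm2; simpl.
  pose proof (Rle_0_sqr (p - r)); pose proof (Rle_0_sqr (q - s)); unfold Rsqr in *; nra.
Qed.

Lemma Cabs_ge0 a : 0 <= Cabs a.
Proof. apply sqrt_pos. Qed.

Lemma Cabs_real r : Cabs (Cmk r 0) = Rabs r.
Proof. unfold Cabs; simpl. rewrite Rmult_0_l, Rplus_0_r. apply sqrt_Rsqr_abs. Qed.

Record Mat2 : Type := Mat2mk { m11 : Cplx; m12 : Cplx; m21 : Cplx; m22 : Cplx }.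
Record Vec2 : Type := Vec2mk { v1 : Cplx; v2 : Cplx }.

Lemma Mat2_ext (A B : Mat2) :
  m11 A = m11 B -> m12 A = m12 B -> m21 A = m21 B -> m22 A = m22 B -> A = B.
Proof. destruct A, B; simpl; intros -> -> -> ->; reflexivity. Qed.

Lemma Vec2_ext (x y : Vec2) : v1 x = v1 y -> v2 x = v2 y -> x = y.
Proof. destruct x, y; simpl; intros -> ->; reflexivity. Qed.

Definition mzero : Mat2 := Mat2mk C0 C0 C0 C0.
Definition mone : Mat2 := Mat2mk C1 C0 C0 C1.
Definition madd (A B : Mat2) : Mat2 :=
  Mat2mk (Cadd (m11 A) (m11 B)) (Cadd (m12 A) (m12 B))
         (Cadd (m21 A) (m21 B)) (Cadd (m22 A) (m22 B)).
Definition mopp (A : Mat2) : Mat2 :=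
  Mat2mk (Copp (m11 A)) (Copp (m12 A)) (Copp (m21 A)) (Copp (m22 A)).
Definition mmul (A B : Mat2) : Mat2 := Mat2mk
  (Cadd (Cmul (m11 A) (m11 B)) (Cmul (m12 A) (m21 B)))
  (Cadd (Cmul (m11 A) (m12 B)) (Cmul (m12 A) (m22 B)))
  (Cadd (Cmul (m21 A) (m11 B)) (Cmul (m22 A) (m21 B)))
  (Cadd (Cmul (m21 A) (m12 B)) (Cmul (m22 A) (m22 B))).
Definition mscale (a : Cplx) (A : Mat2) : Mat2 :=
  Mat2mk (Cmul a (m11 A)) (Cmul a (m12 A)) (Cmul a (m21 A)) (Cmul a (m22 A)).
Definition mstar (A : Mat2) : Mat2 :=
  Mat2mk (Cconj (m11 A)) (Cconj (m21 A)) (Cconj (m12 A)) (Cconj (m22 A)).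

Definition mapply (A : Mat2) (v : Vec2) : Vec2 :=
  Vec2mk (Cadd (Cmul (m11 A) (v1 v)) (Cmul (m12 A) (v2 v)))
         (Cadd (Cmul (m21 A) (v1 v)) (Cmul (m22 A) (v2 v))).
Definition vadd (x y : Vec2) : Vec2 := Vec2mk (Cadd (v1 x) (v1 y)) (Cadd (v2 x) (v2 y)).
Definition vscale (a : Cplx) (x : Vec2) : Vec2 := Vec2mk (Cmul a (v1 x)) (Cmul a (v2 x)).

Definition vnorm2 (v : Vec2) : R := Cnorm2 (v1 v) + Cnorm2 (v2 v).
Definition vnorm (v : Vec2) : R := sqrt (vnorm2 v).
Definition re_dot (x y : Vec2) : R :=
  Cre (v1 x) * Cre (v1 y) + Cim (v1 x) * Cim (v1 y)
  + Cre (v2 x) * Cre (v2 y) + Cim (v2 x) * Cim (v2 y).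

Ltac destruct_cplx := repeat match goal with
  | A : Mat2 |- _ => destruct A
  | v : Vec2 |- _ => destruct v
  | c : Cplx |- _ => destruct c end.

Ltac mat_ring := intros; destruct_cplx; apply Mat2_ext; simpl; apply Cplx_ext; simpl; ring.
Ltac vec_ring := intros; destruct_cplx; apply Vec2_ext; simpl; apply Cplx_ext; simpl; ring.

Lemma mapply_madd A B v : mapply (madd A B) v = vadd (mapply A v) (mapply B v).
Proof. vec_ring. Qed.

Lemma mapply_mmul A B v : mapply (mmul A B) v = mapply A (mapply B v).
Proof. vec_ring. Qed.

Lemma mapply_mscale a A v : mapply (mscale a A) v = vscale a (mapply A v).
Proof. vec_ring. Qed.

Lemma re_dot_mstar A w v : re_dot (mapply (mstar A) w) v = re_dot w (mapply A v).
Proof. destruct_cplx; unfold re_dot; simpl; ring. Qed.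

Lemma re_dot_diag x : re_dot x x = vnorm2 x.
Proof. destruct_cplx; unfold re_dot, vnorm2, Cnorm2; simpl; ring. Qed.

Lemma mstar_involutive A : mstar (mstar A) = A.
Proof. mat_ring. Qed.

Lemma vnorm2_ge0 v : 0 <= vnorm2 v.
Proof. unfold vnorm2; pose proof (Cnorm2_ge0 (v1 v)); pose proof (Cnorm2_ge0 (v2 v)); lra. Qed.

Lemma vnorm_ge0 v : 0 <= vnorm v.
Proof. apply sqrt_pos. Qed.

Lemma vnorm_sqr v : vnorm v * vnorm v = vnorm2 v.
Proof. apply sqrt_sqrt, vnorm2_ge0. Qed.

Lemma vnorm_le_of_vnorm2 x M : 0 <= M -> vnorm2 x <= M * M -> vnorm x <= M.
Proof. intros HM Hx. unfold vnorm. rewrite <- (sqrt_square M) by exact HM. now apply sqrt_le_1_alt. Qed.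

Lemma re_dot_sqr_le x y : re_dot x y * re_dot x y <= vnorm2 x * vnorm2 y.
Proof.
  destruct x as [[a b] [c d]], y as [[e f] [g h]]; unfold re_dot, vnorm2, Cnorm2; simpl.
  assert (Lagrange :
    (a*a+b*b+(c*c+d*d)) * (e*e+f*f+(g*g+h*h)) - (a*e+b*f+c*g+d*h)*(a*e+b*f+c*g+d*h) =
     (a*f-b*e)*(a*f-b*e) + (a*g-c*e)*(a*g-c*e) + (a*h-d*e)*(a*h-d*e)
     + (b*g-c*f)*(b*g-c*f) + (b*h-d*f)*(b*h-d*f) + (c*h-d*g)*(c*h-d*g)) by ring.
  pose proof (Rle_0_sqr (a*f-b*e)); pose proof (Rle_0_sqr (a*g-c*e));
  pose proof (Rle_0_sqr (a*h-d*e)); pose proof (Rle_0_sqr (b*g-c*f));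
  pose proof (Rle_0_sqr (b*h-d*f)); pose proof (Rle_0_sqr (c*h-d*g)).
  unfold Rsqr in *; lra.
Qed.

Lemma re_dot_le x y : re_dot x y <= vnorm x * vnorm y.
Proof.
  pose proof (re_dot_sqr_le x y) as H.
  pose proof (vnorm_ge0 x); pose proof (vnorm_ge0 y).
  rewrite <- (vnorm_sqr x), <- (vnorm_sqr y) in H.
  destruct (Rle_dec (re_dot x y) (vnorm x * vnorm y)) as [|Hgt]; [assumption|].
  exfalso. assert (0 <= vnorm x * vnorm y) by nra. nra.
Qed.

Lemma vnorm_triangle x y : vnorm (vadd x y) <= vnorm x + vnorm y.
Proof.
  pose proof (re_dot_le x y).
  pose proof (vnorm_ge0 x); pose proof (vnorm_ge0 y); pose proof (vnorm_ge0 (vadd x y)).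
  assert (E : vnorm2 (vadd x y) = vnorm2 x + vnorm2 y + 2 * re_dot x y).
  { destruct_cplx; unfold vnorm2, Cnorm2, re_dot; simpl; ring. }
  rewrite <- !vnorm_sqr in E. nra.
Qed.

Lemma vnorm2_vscale a x : vnorm2 (vscale a x) = Cnorm2 a * vnorm2 x.
Proof. destruct_cplx; unfold vnorm2, Cnorm2; simpl; ring. Qed.

Lemma vnorm_vscale a x : vnorm (vscale a x) = Cabs a * vnorm x.
Proof.
  unfold vnorm, Cabs. rewrite <- sqrt_mult by (apply Cnorm2_ge0 || apply vnorm2_ge0).
  now rewrite vnorm2_vscale.
Qed.

Definition frob2 (A : Mat2) : R :=
  Cnorm2 (m11 A) + Cnorm2 (m12 A) + Cnorm2 (m21 A) + Cnorm2 (m22 A).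

Lemma frob2_ge0 A : 0 <= frob2 A.
Proof.
  unfold frob2; pose proof (Cnorm2_ge0 (m11 A)); pose proof (Cnorm2_ge0 (m12 A));
  pose proof (Cnorm2_ge0 (m21 A)); pose proof (Cnorm2_ge0 (m22 A)); lra.
Qed.

Lemma vnorm2_mapply_le A v : vnorm2 (mapply A v) <= 2 * frob2 A * vnorm2 v.
Proof.
  unfold vnorm2, mapply, frob2; simpl.
  pose proof (Cnorm2_add_le (Cmul (m11 A) (v1 v)) (Cmul (m12 A) (v2 v))).
  pose proof (Cnorm2_add_le (Cmul (m21 A) (v1 v)) (Cmul (m22 A) (v2 v))).
  rewrite !Cnorm2_mul in *.
  pose proof (Cnorm2_ge0 (m11 A)); pose proof (Cnorm2_ge0 (m12 A));
  pose proof (Cnorm2_ge0 (m21 A)); pose proof (Cnorm2_ge0 (m22 A));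
  pose proof (Cnorm2_ge0 (v1 v)); pose proof (Cnorm2_ge0 (v2 v)).
  nra.
Qed.

Definition unit_ball_image (A : Mat2) (r : R) : Prop :=
  exists v, vnorm2 v <= 1 /\ r = vnorm (mapply A v).

Lemma unit_ball_image_bound A : bound (unit_ball_image A).
Proof.
  exists (sqrt (2 * frob2 A)). intros r [v [Hv ->]]. apply sqrt_le_1_alt.
  pose proof (vnorm2_mapply_le A v). pose proof (frob2_ge0 A). nra.
Qed.

Definition vzero : Vec2 := Vec2mk C0 C0.

Lemma unit_ball_image_zero A : unit_ball_image A (vnorm (mapply A vzero)).
Proof. exists vzero. split; [unfold vnorm2, Cnorm2; simpl; lra | reflexivity]. Qed.

Definition opnorm (A : Mat2) : R :=
  proj1_sig (completeness (unit_ball_image A) (unit_ball_image_bound A)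
               (ex_intro _ _ (unit_ball_image_zero A))).

Lemma opnorm_lub A : is_lub (unit_ball_image A) (opnorm A).
Proof. unfold opnorm; destruct completeness; assumption. Qed.

Lemma opnorm_ge0 A : 0 <= opnorm A.
Proof.
  apply Rle_trans with (vnorm (mapply A vzero)); [apply vnorm_ge0|].
  apply (opnorm_lub A), unit_ball_image_zero.
Qed.

Lemma opnorm_apply_le A v : vnorm (mapply A v) <= opnorm A * vnorm v.
Proof.
  pose proof (opnorm_ge0 A). pose proof (vnorm_ge0 v). pose proof (vnorm2_ge0 v).
  destruct (Req_dec (vnorm v) 0) as [Hv0|Hv0].
  - assert (E : vnorm2 (mapply A v) = 0).
    { pose proof (vnorm2_mapply_le A v). pose proof (vnorm2_ge0 (mapply A v)).
      rewrite <- (vnorm_sqr v), Hv0 in *. nra. }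
    unfold vnorm at 1; rewrite E, sqrt_0. nra.
  - assert (Hinv : 0 < / vnorm v) by (apply Rinv_0_lt_compat; lra).
    assert (Hunit : vnorm2 (vscale (Cmk (/ vnorm v) 0) v) <= 1).
    { rewrite vnorm2_vscale, <- vnorm_sqr. unfold Cnorm2; simpl. field_simplify; lra. }
    assert (Hle : vnorm (mapply A (vscale (Cmk (/ vnorm v) 0) v)) <= opnorm A)
      by (apply (opnorm_lub A); eexists; split; [exact Hunit | reflexivity]).
    replace (mapply A (vscale (Cmk (/ vnorm v) 0) v))
      with (vscale (Cmk (/ vnorm v) 0) (mapply A v)) in Hle by vec_ring.
    rewrite vnorm_vscale, Cabs_real, Rabs_right in Hle by lra.
    apply Rmult_le_reg_l with (/ vnorm v); [exact Hinv|].
    replace (/ vnorm v * (opnorm A * vnorm v)) with (opnorm A) by (field; lra). exact Hle.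
Qed.

Lemma opnorm_le A M : 0 <= M -> (forall v, vnorm (mapply A v) <= M * vnorm v) -> opnorm A <= M.
Proof.
  intros HM H. apply (opnorm_lub A). intros r [v [Hv ->]].
  eapply Rle_trans; [apply H|].
  assert (vnorm v <= 1) by (apply vnorm_le_of_vnorm2; lra).
  pose proof (vnorm_ge0 v). nra.
Qed.

Lemma opnorm_triangle A B : opnorm (madd A B) <= opnorm A + opnorm B.
Proof.
  pose proof (opnorm_ge0 A); pose proof (opnorm_ge0 B).
  apply opnorm_le; [lra|]. intros v. rewrite mapply_madd.
  eapply Rle_trans; [apply vnorm_triangle|].
  pose proof (opnorm_apply_le A v); pose proof (opnorm_apply_le B v). lra.
Qed.

Lemma opnorm_submult A B : opnorm (mmul A B) <= opnorm A * opnorm B.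
Proof.
  pose proof (opnorm_ge0 A); pose proof (opnorm_ge0 B).
  apply opnorm_le; [nra|]. intros v. rewrite mapply_mmul.
  eapply Rle_trans; [apply opnorm_apply_le|].
  pose proof (opnorm_apply_le B v). rewrite Rmult_assoc. now apply Rmult_le_compat_l.
Qed.

Lemma opnorm_mscale a A : opnorm (mscale a A) = Cabs a * opnorm A.
Proof.
  pose proof (opnorm_ge0 A); pose proof (Cabs_ge0 a); pose proof (opnorm_ge0 (mscale a A)).
  apply Rle_antisym.
  - apply opnorm_le; [nra|]. intros v. rewrite mapply_mscale, vnorm_vscale, Rmult_assoc.
    apply Rmult_le_compat_l; [assumption | apply opnorm_apply_le].
  - destruct (Req_dec (Cabs a) 0) as [Ha0|Ha0]; [rewrite Ha0; lra|].
    assert (Hle : opnorm A <= opnorm (mscale a A) / Cabs a).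
    { apply opnorm_le.
      - unfold Rdiv; apply Rmult_le_pos; [lra | left; apply Rinv_0_lt_compat; lra].
      - intros v. pose proof (opnorm_apply_le (mscale a A) v) as Hv.
        rewrite mapply_mscale, vnorm_vscale in Hv.
        apply Rmult_le_reg_l with (Cabs a); [lra|].
        replace (Cabs a * (opnorm (mscale a A) / Cabs a * vnorm v))
          with (opnorm (mscale a A) * vnorm v) by (field; lra). exact Hv. }
    apply Rmult_le_reg_r with (/ Cabs a); [apply Rinv_0_lt_compat; lra|].
    replace (Cabs a * opnorm A * / Cabs a) with (opnorm A) by (field; lra). exact Hle.
Qed.

(* |Av|^2 = <A^* A v, v> <= |A^* A| |v|^2 *)
Lemma opnorm_sqr_le_cstar A : opnorm A * opnorm A <= opnorm (mmul (mstar A) A).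
Proof.
  pose proof (opnorm_ge0 A); pose proof (opnorm_ge0 (mmul (mstar A) A)).
  set (K := opnorm (mmul (mstar A) A)) in *.
  assert (Hle : opnorm A <= sqrt K).
  { apply opnorm_le; [apply sqrt_pos|]. intros v.
    assert (vnorm2 (mapply A v) <= K * (vnorm v * vnorm v)).
    { rewrite <- re_dot_diag, <- re_dot_mstar, <- mapply_mmul.
      eapply Rle_trans; [apply re_dot_le|].
      pose proof (opnorm_apply_le (mmul (mstar A) A) v) as HK. fold K in HK.
      pose proof (vnorm_ge0 v). nra. }
    apply vnorm_le_of_vnorm2; [apply Rmult_le_pos; [apply sqrt_pos | apply vnorm_ge0]|].
    replace (sqrt K * vnorm v * (sqrt K * vnorm v))
      with (sqrt K * sqrt K * (vnorm v * vnorm v)) by ring.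
    now rewrite sqrt_sqrt. }
  rewrite <- (sqrt_sqrt K) by assumption. now apply Rmult_le_compat.
Qed.

Lemma opnorm_le_mstar A : opnorm A <= opnorm (mstar A).
Proof.
  pose proof (opnorm_sqr_le_cstar A). pose proof (opnorm_submult (mstar A) A).
  pose proof (opnorm_ge0 A); pose proof (opnorm_ge0 (mstar A)).
  destruct (Req_dec (opnorm A) 0) as [E|E]; [lra|].
  apply Rmult_le_reg_r with (opnorm A); nra.
Qed.

Lemma opnorm_mstar A : opnorm (mstar A) = opnorm A.
Proof.
  apply Rle_antisym; [|apply opnorm_le_mstar].
  rewrite <- (mstar_involutive A) at 2. apply opnorm_le_mstar.
Qed.

Lemma opnorm_cstar A : opnorm (mmul (mstar A) A) = opnorm A * opnorm A.
Proof.
  apply Rle_antisym; [|apply opnorm_sqr_le_cstar].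
  rewrite <- (opnorm_mstar A) at 1. apply opnorm_submult.
Qed.

Lemma entries_Cnorm2_le_opnorm A :
  Cnorm2 (m11 A) <= opnorm A * opnorm A /\ Cnorm2 (m21 A) <= opnorm A * opnorm A /\
  Cnorm2 (m12 A) <= opnorm A * opnorm A /\ Cnorm2 (m22 A) <= opnorm A * opnorm A.
Proof.
  assert (Hcol : forall e, vnorm e = 1 -> vnorm2 (mapply A e) <= opnorm A * opnorm A).
  { intros e He. pose proof (opnorm_apply_le A e) as Hle. rewrite He, Rmult_1_r in Hle.
    pose proof (vnorm_ge0 (mapply A e)). rewrite <- vnorm_sqr. nra. }
  assert (Hunit : forall e, vnorm2 e = 1 -> vnorm e = 1)
    by (intros e He; unfold vnorm; rewrite He; apply sqrt_1).
  pose proof (Hcol (Vec2mk C1 C0) ltac:(apply Hunit; unfold vnorm2, Cnorm2; simpl; ring)) as H1.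
  pose proof (Hcol (Vec2mk C0 C1) ltac:(apply Hunit; unfold vnorm2, Cnorm2; simpl; ring)) as H2.
  destruct A as [[] [] [] []]; unfold vnorm2, Cnorm2 in *; simpl in *.
  repeat split; nra.
Qed.

Lemma opnorm_eq0 A : opnorm A = 0 -> A = mzero.
Proof.
  intros H. pose proof (entries_Cnorm2_le_opnorm A) as E. rewrite H in E.
  destruct A as [[] [] [] []]; unfold Cnorm2 in *; simpl in *.
  apply Mat2_ext; apply Cplx_ext; simpl; nra.
Qed.

Lemma opnorm_le_frob A : opnorm A <= sqrt (2 * frob2 A).
Proof.
  apply opnorm_le; [apply sqrt_pos|]. intros v. unfold vnorm.
  rewrite <- sqrt_mult by (pose proof (frob2_ge0 A); lra || apply vnorm2_ge0).
  apply sqrt_le_1_alt, vnorm2_mapply_le.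
Qed.

Definition mcoord (k : nat) (A : Mat2) : R :=
  match k with
  | 0 => Cre (m11 A) | 1 => Cim (m11 A) | 2 => Cre (m12 A) | 3 => Cim (m12 A)
  | 4 => Cre (m21 A) | 5 => Cim (m21 A) | 6 => Cre (m22 A) | 7 => Cim (m22 A)
  | _ => 0 end.

Definition of_mcoords (c : nat -> R) : Mat2 :=
  Mat2mk (Cmk (c 0%nat) (c 1%nat)) (Cmk (c 2%nat) (c 3%nat))
         (Cmk (c 4%nat) (c 5%nat)) (Cmk (c 6%nat) (c 7%nat)).

Lemma mcoord_of_mcoords c k : (k < 8)%nat -> mcoord k (of_mcoords c) = c k.
Proof. intros Hk. do 8 (destruct k as [|k]; [reflexivity|]). lia. Qed.

Lemma mcoord_sub k A B : mcoord k (madd A (mopp B)) = mcoord k A - mcoord k B.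
Proof. do 8 (destruct k as [|k]; [simpl; ring|]). simpl; ring. Qed.

Lemma Rabs_mcoord_le k A : Rabs (mcoord k A) <= opnorm A.
Proof.
  pose proof (entries_Cnorm2_le_opnorm A) as [E1 [E2 [E3 E4]]].
  pose proof (opnorm_ge0 A). unfold Cnorm2 in *.
  assert (Hsq : forall x y, x * x + y * y <= opnorm A * opnorm A ->
                  Rabs x <= opnorm A /\ Rabs y <= opnorm A)
    by (intros x y Hxy; split; apply Rabs_le; split; nra).
  destruct (Hsq _ _ E1), (Hsq _ _ E2), (Hsq _ _ E3), (Hsq _ _ E4).
  do 8 (destruct k as [|k]; [assumption|]).
  simpl; rewrite Rabs_R0; assumption.
Qed.

Lemma frob2_mcoords A : frob2 A = mcoord 0 A * mcoord 0 A + mcoord 1 A * mcoord 1 A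
  + mcoord 2 A * mcoord 2 A + mcoord 3 A * mcoord 3 A + mcoord 4 A * mcoord 4 A
  + mcoord 5 A * mcoord 5 A + mcoord 6 A * mcoord 6 A + mcoord 7 A * mcoord 7 A.
Proof. destruct A as [[] [] [] []]; unfold frob2, Cnorm2; simpl; ring. Qed.

Lemma eventually_forall_lt (P : nat -> nat -> Prop) m :
  (forall k, (k < m)%nat -> exists M, forall n, (M <= n)%nat -> P k n) ->
  exists M, forall k n, (k < m)%nat -> (M <= n)%nat -> P k n.
Proof.
  induction m as [|m IH]; intros H.
  - exists 0%nat. intros; lia.
  - destruct IH as [M1 H1]; [intros; apply H; lia|].
    destruct (H m) as [M2 H2]; [lia|].
    exists (Nat.max M1 M2). intros k n Hk Hn.
    destruct (Nat.eq_dec k m) as [->|]; [apply H2 | apply H1]; lia.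
Qed.

(* Coordinatewise limits exist since |coordinate| <= opnorm, and opnorm <= sqrt(2 frob2)
   turns coordinatewise convergence back into convergence in norm. *)
Lemma opnorm_complete (u : nat -> Mat2) :
  (forall eps, 0 < eps -> exists M, forall m n, (M <= m)%nat -> (M <= n)%nat ->
     opnorm (madd (u m) (mopp (u n))) < eps) ->
  exists l, forall eps, 0 < eps -> exists M, forall n, (M <= n)%nat ->
     opnorm (madd (u n) (mopp l)) < eps.
Proof.
  intros Hc.
  assert (Hk : forall k, Cauchy_crit (fun n => mcoord k (u n))).
  { intros k eps He. destruct (Hc eps He) as [M HM]. exists M. intros n m Hn Hm.
    unfold Rdist. rewrite <- mcoord_sub.
    eapply Rle_lt_trans; [apply Rabs_mcoord_le | apply HM; lia]. }
  set (l := fun k => proj1_sig (R_complete _ (Hk k))).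
  assert (Hl : forall k, Un_cv (fun n => mcoord k (u n)) (l k))
    by (intros k; unfold l; destruct R_complete; assumption).
  exists (of_mcoords l). intros eps He.
  destruct (eventually_forall_lt (fun k n => Rabs (mcoord k (u n) - l k) < eps / 4) 8)
    as [M HM].
  { intros k _. destruct (Hl k (eps / 4)) as [M HM]; [lra|].
    exists M. intros n Hn. apply HM. lia. }
  exists M. intros n Hn.
  assert (Q : forall k, (k < 8)%nat ->
    mcoord k (madd (u n) (mopp (of_mcoords l))) * mcoord k (madd (u n) (mopp (of_mcoords l)))
      < eps / 4 * (eps / 4)).
  { intros k Hk8. rewrite mcoord_sub, mcoord_of_mcoords by assumption.
    specialize (HM k n Hk8 Hn). apply Rabs_def2 in HM. nra. }
  eapply Rle_lt_trans; [apply opnorm_le_frob|].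
  rewrite <- (sqrt_square eps) by lra.
  apply sqrt_lt_1_alt. split; [pose proof (frob2_ge0 (madd (u n) (mopp (of_mcoords l)))); lra|].
  rewrite frob2_mcoords.
  pose proof (Q 0%nat ltac:(lia)); pose proof (Q 1%nat ltac:(lia));
  pose proof (Q 2%nat ltac:(lia)); pose proof (Q 3%nat ltac:(lia));
  pose proof (Q 4%nat ltac:(lia)); pose proof (Q 5%nat ltac:(lia));
  pose proof (Q 6%nat ltac:(lia)); pose proof (Q 7%nat ltac:(lia)). lra.
Qed.

Definition M2C : CStarAlg.
Proof.
  refine (@Build_CStarAlg Mat2 mzero mone madd mopp mmul mscale mstar opnorm
    _ _ _ _ _ _ _ _ _ _ _ _ _ _ _ _ _ _ _ _ _ _ _ _ _).
  all: try mat_ring.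
  - exact opnorm_eq0.
  - exact opnorm_triangle.
  - exact opnorm_mscale.
  - exact opnorm_submult.
  - exact opnorm_cstar.
  - exact opnorm_complete.
Defined.

Section FiniteSums.

Variable A : CStarAlg.

Lemma aadd_0l (x : A) : aadd azero x = x.
Proof. rewrite aadd_comm; apply aadd_0. Qed.

Lemma aadd_add4 (x y z t : A) : aadd (aadd x y) (aadd z t) = aadd (aadd x z) (aadd y t).
Proof.
  rewrite <- !aadd_assoc. f_equal. rewrite !aadd_assoc. f_equal. apply aadd_comm.
Qed.

Lemma sumA_ext (f g : nat -> A) n :
  (forall i, (i < n)%nat -> f i = g i) -> sumA f n = sumA g n.
Proof. induction n as [|n IH]; intros H; simpl; [reflexivity|]. rewrite IH, H; auto. Qed.

Lemma sumA_add (f g : nat -> A) n :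
  sumA (fun i => aadd (f i) (g i)) n = aadd (sumA f n) (sumA g n).
Proof.
  induction n as [|n IH]; simpl; [now rewrite aadd_0|]. now rewrite IH, aadd_add4.
Qed.

Lemma sumA_eq0 (f : nat -> A) n : (forall i, (i < n)%nat -> f i = azero) -> sumA f n = azero.
Proof.
  induction n as [|n IH]; intros H; simpl; [reflexivity|]. rewrite IH, H; auto. apply aadd_0.
Qed.

Lemma sumA_single (f : nat -> A) n a : (a < n)%nat ->
  (forall i, (i < n)%nat -> i <> a -> f i = azero) -> sumA f n = f a.
Proof.
  induction n as [|n IH]; intros Ha H; [lia|]. simpl.
  destruct (Nat.eq_dec a n) as [->|Hne].
  - rewrite sumA_eq0, aadd_0l; auto. intros i Hi; apply H; lia.
  - rewrite IH, (H n), aadd_0; auto; lia.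
Qed.

Lemma sumA_pair (f : nat -> A) n a b : a <> b -> (a < n)%nat -> (b < n)%nat ->
  (forall i, (i < n)%nat -> i <> a -> i <> b -> f i = azero) ->
  sumA f n = aadd (f a) (f b).
Proof.
  intros Hab Ha Hb H.
  rewrite (sumA_ext f (fun i => aadd (if Nat.eq_dec i a then f i else azero)
                                     (if Nat.eq_dec i a then azero else f i))).
  2:{ intros i _. destruct (Nat.eq_dec i a); [rewrite aadd_0 | rewrite aadd_0l]; reflexivity. }
  rewrite sumA_add, (sumA_single _ n a), (sumA_single _ n b); auto.
  - destruct (Nat.eq_dec a a), (Nat.eq_dec b a); congruence.
  - intros i Hi Hib. destruct (Nat.eq_dec i a); auto.
  - intros i Hi Hia. destruct (Nat.eq_dec i a); congruence.
Qed.

End FiniteSums.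

Section StarHomomorphisms.

Variables A B : CStarAlg.
Variable phi : A -> B.
Hypothesis Hphi : is_star_hom A B phi.

Lemma star_hom_zero : phi azero = azero.
Proof.
  destruct Hphi as [Hadd _].
  assert (E : aadd (phi azero) (phi azero) = phi azero) by now rewrite <- Hadd, aadd_0.
  transitivity (aadd (aadd (phi azero) (phi azero)) (aopp (phi azero))).
  - now rewrite <- aadd_assoc, aadd_opp, aadd_0.
  - rewrite E; apply aadd_opp.
Qed.

Lemma star_hom_sumA (f : nat -> A) n : phi (sumA f n) = sumA (fun i => phi (f i)) n.
Proof.
  destruct Hphi as [Hadd _].
  induction n as [|n IH]; simpl; [apply star_hom_zero | now rewrite Hadd, IH].
Qed.

Lemma star_hom_lincomb5p3 N (x : nat -> A) (y : nat -> B) alpha beta gamma :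
  (forall i, (i < N)%nat -> phi (x i) = y i) ->
  phi (lincomb5p3 N A x alpha beta gamma) = lincomb5p3 N B y alpha beta gamma.
Proof.
  intros Hy. pose proof Hphi as [Hadd [Hscale [Hmul _]]]. unfold lincomb5p3.
  rewrite Hadd, !star_hom_sumA. f_equal.
  - apply sumA_ext. intros i Hi. rewrite star_hom_sumA. apply sumA_ext. intros j Hj.
    destruct (Nat.eq_dec i j); [apply star_hom_zero|].
    now rewrite Hadd, !Hscale, !Hmul, !Hy.
  - apply sumA_ext. intros i Hi. now rewrite Hscale, !Hmul, Hy.
Qed.

End StarHomomorphisms.

Definition antidiag (z : Cplx) : Mat2 := Mat2mk C0 z (Cconj z) C0.

Lemma antidiag_C0 : antidiag C0 = mzero.
Proof. mat_ring. Qed.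

Definition pair_at (a b : nat) (z w : Cplx) (i : nat) : Cplx :=
  if Nat.eq_dec i a then z else if Nat.eq_dec i b then w else C0.

Lemma pair_at_l a b z w : pair_at a b z w a = z.
Proof. unfold pair_at; destruct (Nat.eq_dec a a); congruence. Qed.

Lemma pair_at_r a b z w : a <> b -> pair_at a b z w b = w.
Proof. intros; unfold pair_at; destruct (Nat.eq_dec b a), (Nat.eq_dec b b); congruence. Qed.

Lemma pair_at_other a b z w i : i <> a -> i <> b -> pair_at a b z w i = C0.
Proof. intros; unfold pair_at; destruct (Nat.eq_dec i a), (Nat.eq_dec i b); congruence. Qed.

Definition pair_rep (a b : nat) (z w : Cplx) (i : nat) : M2C := antidiag (pair_at a b z w i).

Lemma pair_rep_other a b z w i : i <> a -> i <> b -> pair_rep a b z w i = mzero.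
Proof. intros. unfold pair_rep. now rewrite pair_at_other, antidiag_C0. Qed.

Lemma antidiag_mmul3 p q r :
  mmul (mmul (antidiag p) (antidiag q)) (antidiag r)
  = antidiag (Cmul (Cmul p (Cconj q)) r).
Proof. mat_ring. Qed.

Lemma rel_S_pair_rep N a b z w : a <> b -> (a < N)%nat -> (b < N)%nat ->
  Cnorm2 z + Cnorm2 w = 1 -> rel_S N M2C (pair_rep a b z w).
Proof.
  intros Hab Ha Hb Hzw. split; [|split; [|split]].
  - intros i _. mat_ring.
  - rewrite (sumA_pair _ _ _ a b) by
      (auto; intros i _ Hia Hib; rewrite pair_rep_other by assumption; mat_ring).
    unfold pair_rep. rewrite pair_at_l, pair_at_r by assumption.
    destruct z, w; unfold Cnorm2 in Hzw; simpl in Hzw.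
    apply Mat2_ext; apply Cplx_ext; simpl; lra.
  - (* among three pairwise distinct indices one lies outside {a, b} *)
    intros i j k _ _ _ Hij Hjk Hik.
    assert (Hout : pair_rep a b z w i = mzero \/ pair_rep a b z w j = mzero \/
                   pair_rep a b z w k = mzero).
    { destruct (Nat.eq_dec i a), (Nat.eq_dec i b);
        [lia | | | left; apply pair_rep_other; assumption];
        (destruct (Nat.eq_dec j a), (Nat.eq_dec j b);
         [lia | | | right; left; apply pair_rep_other; assumption];
         right; right; apply pair_rep_other; lia). }
    destruct Hout as [-> | [-> | ->]]; mat_ring.
  - intros i j k _ _ _ _. simpl. unfold pair_rep. rewrite !antidiag_mmul3.
    f_equal. destruct_cplx; apply Cplx_ext; simpl; ring.
Qed.

Definition pair_lincomb (a b : nat) (z w : Cplx) (alpha beta : nat -> nat -> Cplx) (gamma : nat -> Cplx) : Mat2 :=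
  let X := antidiag z in let Y := antidiag w in
  madd (madd (madd (mscale (alpha a b) (mmul (mmul X X) Y))
                   (mscale (beta a b) (mmul (mmul X Y) X)))
             (madd (mscale (alpha b a) (mmul (mmul Y Y) X))
                   (mscale (beta b a) (mmul (mmul Y X) Y))))
       (madd (mscale (gamma a) (mmul (mmul X X) X))
             (mscale (gamma b) (mmul (mmul Y Y) Y))).

Lemma lincomb5p3_pair_rep N a b z w alpha beta gamma : a <> b -> (a < N)%nat -> (b < N)%nat ->
  lincomb5p3 N M2C (pair_rep a b z w) alpha beta gamma = pair_lincomb a b z w alpha beta gamma.
Proof.
  intros Hab Ha Hb. unfold lincomb5p3.
  (* every summand involving an index outside {a, b} has a zero factor *)
  assert (Hzero : forall i, i <> a -> i <> b -> pair_rep a b z w i = mzero)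
    by (intros; apply pair_rep_other; assumption).
  repeat rewrite (sumA_pair _ _ _ a b) by
    (auto; intros i _ Hia Hib; cbv beta;
     first [ apply sumA_eq0; intros j _; destruct (Nat.eq_dec i j);
             [reflexivity | rewrite (Hzero i) by assumption; mat_ring]
           | destruct (Nat.eq_dec _ i); [reflexivity | rewrite (Hzero i) by assumption; mat_ring]
           | rewrite (Hzero i) by assumption; mat_ring ]).
  destruct (Nat.eq_dec a a), (Nat.eq_dec a b), (Nat.eq_dec b a), (Nat.eq_dec b b);
    try congruence.
  unfold pair_rep. rewrite pair_at_l, pair_at_r by assumption. mat_ring.
Qed.

Lemma pair_lincomb_vanishes N U u alpha beta gamma a b z w :
  is_universal_S N U u -> lincomb5p3 N U u alpha beta gamma = azero ->
  a <> b -> (a < N)%nat -> (b < N)%nat -> Cnorm2 z + Cnorm2 w = 1 ->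
  pair_lincomb a b z w alpha beta gamma = mzero.
Proof.
  intros [_ Huniv] Hzero Hab Ha Hb Hzw.
  destruct (Huniv M2C _ (rel_S_pair_rep N a b z w Hab Ha Hb Hzw)) as [phi [[Hphi Hgen] _]].
  rewrite <- (lincomb5p3_pair_rep N) by assumption.
  rewrite <- (star_hom_lincomb5p3 U M2C phi Hphi N u) by assumption.
  rewrite Hzero. exact (star_hom_zero U M2C phi Hphi).
Qed.

Lemma Cplx_eq_C0 z : z = C0 -> Cre z = 0 /\ Cim z = 0.
Proof. now intros ->. Qed.

Section Coefficients.

Variables (N : nat) (U : CStarAlg) (u : nat -> U).
Hypothesis HU : is_universal_S N U u.
Variables (alpha beta : nat -> nat -> Cplx) (gamma : nat -> Cplx).
Hypothesis Hzero : lincomb5p3 N U u alpha beta gamma = azero.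
Variables (a b : nat).
Hypotheses (Hab : a <> b) (Ha : (a < N)%nat) (Hb : (b < N)%nat).

Lemma m12_pair_lincomb_eq0 z w : Cnorm2 z + Cnorm2 w = 1 ->
  m12 (pair_lincomb a b z w alpha beta gamma) = C0.
Proof. intros Hzw. now rewrite (pair_lincomb_vanishes N U u) by assumption. Qed.

Lemma gamma_eq0_l : gamma a = C0.
Proof.
  pose proof (m12_pair_lincomb_eq0 C1 C0 ltac:(unfold Cnorm2; simpl; ring)) as E.
  apply Cplx_eq_C0 in E as [Ere Eim]. simpl in Ere, Eim.
  apply Cplx_ext; simpl; lra.
Qed.

Lemma gamma_eq0_r : gamma b = C0.
Proof.
  pose proof (m12_pair_lincomb_eq0 C0 C1 ltac:(unfold Cnorm2; simpl; ring)) as E.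
  apply Cplx_eq_C0 in E as [Ere Eim]. simpl in Ere, Eim.
  apply Cplx_ext; simpl; lra.
Qed.

(* The (1,2) entry is linear in the remaining four coefficients; the points
   (3/5, w) with w = ±4/5, ±4i/5 give eight independent real equations. *)
Lemma alpha_beta_eq0 : alpha a b = C0 /\ beta a b = C0.
Proof.
  assert (Hval : forall w, Cnorm2 w = 16 / 25 ->
            Cre (m12 (pair_lincomb a b (Cmk (3/5) 0) w alpha beta gamma)) = 0 /\
            Cim (m12 (pair_lincomb a b (Cmk (3/5) 0) w alpha beta gamma)) = 0).
  { intros w Hw. apply Cplx_eq_C0, m12_pair_lincomb_eq0.
    rewrite Hw. unfold Cnorm2; simpl; field. }
  destruct (Hval (Cmk (4/5) 0)) as [E1 E2]; [unfold Cnorm2; simpl; field|].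
  destruct (Hval (Cmk (-(4/5)) 0)) as [E3 E4]; [unfold Cnorm2; simpl; field|].
  destruct (Hval (Cmk 0 (4/5))) as [E5 E6]; [unfold Cnorm2; simpl; field|].
  destruct (Hval (Cmk 0 (-(4/5)))) as [E7 E8]; [unfold Cnorm2; simpl; field|].
  simpl in *. rewrite gamma_eq0_l, gamma_eq0_r in *. simpl in *.
  split; apply Cplx_ext; simpl; lra.
Qed.

End Coefficients.

Theorem lemma5p3 (N : nat) (HN : (2 <= N)%nat) (U : CStarAlg) (u : nat -> U)
  (HU : is_universal_S N U u)
  (alpha beta : nat -> nat -> Cplx) (gamma : nat -> Cplx) :
  lincomb5p3 N U u alpha beta gamma = azero ->
  (forall a b, (a < N)%nat -> (b < N)%nat -> a <> b ->
     alpha a b = C0 /\ beta a b = C0) /\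
  (forall a, (a < N)%nat -> gamma a = C0).
Proof.
  intros Hzero. split.
  - intros a b Ha Hb Hab. exact (alpha_beta_eq0 N U u HU alpha beta gamma Hzero a b Hab Ha Hb).
  - intros a Ha.
    set (b := if Nat.eq_dec a 0 then 1%nat else 0%nat).
    assert (Hb : (b < N)%nat /\ a <> b) by (unfold b; destruct (Nat.eq_dec a 0); lia).
    exact (gamma_eq0_l N U u HU alpha beta gamma Hzero a b (proj2 Hb) Ha (proj1 Hb)).
Qed.
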